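(* The family of inequalities $$\sum_{k\in[n]}-p_{k0,1}+\sum_{k\in T}(p_{k1,0}-p_{k1,1})\le 0\ (\emptyset\ne T\subseteq\{0,\dots,n-2\}),\quad \sum_{k\in[n]}-p_{k1,0}+\sum_{k\in T}(p_{k0,1}-p_{k0,0})\le 0\ (\emptyset\ne T\subsetneq[n]),$$ $$\sum_{k\in[n]}-p_{k0,0}+\sum_{k\in T}(p_{k1,1}-p_{k1,0})\le 0\ (\emptyset\ne T\subseteq\{0,\dots,n-2\}),$$ which characterizes the observed laws compatible with the IV model when $\ell=2$, consists of exactly $2^{n+1}-4$ sharp inequalities: none of them can be removed, i.e. for each inequality of the family there exists an observed law $\mathcal P$ (with $\mathcal P(Z=0),\mathcal P(Z=1)>0$) satisfying all other inequalities of the family but violating that one.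
   Context: $D\in\{0,1\}$ treatment; $Y$ outcome with values $\gamma_0<\dots<\gamma_{n-1}$; instrument $Z\in\{0,1\}$; $[n]=\{0,\dots,n-1\}$; $p_{yd,z}=\mathcal P(Y=\gamma_y,D=d\mid Z=z)$ for an observed law $\mathcal P$ of $(Y,D,Z)$. The IV model: potential outcomes $Y^{(d,z)}$ and treatments $D^{(z)}$ with exclusion $Y^{(d,0)}=Y^{(d,1)}$ a.s. (written $Y^{(d)}$), random assignment $Z\perp(Y^{(0)},Y^{(1)},D^{(0)},D^{(1)})$, and consistency $Y=(1-D)Y^{(0)}+DY^{(1)}$, $D=\mathbb 1(Z=0)D^{(0)}+\mathbb 1(Z=1)D^{(1)}$; $\mathcal P$ is compatible if it is induced by such a full data law. *)

From HB Require Import structures.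
From mathcomp Require Import all_boot all_order all_algebra.
From mathcomp Require Import reals.
Set Implicit Arguments. Unset Strict Implicit. Unset Printing Implicit Defensive.
Import Order.TTheory GRing.Theory Num.Theory.
Local Open Scope ring_scope.

(* A joint law of (Y, D, Z): P y d z = P(Y = gamma_y, D = d, Z = z),
   with d, z in {0,1} encoded as false = 0, true = 1. *)
Definition PZ (R : realType) (n : nat) (P : 'I_n -> bool -> bool -> R) (z : bool) : R :=
  \sum_(y < n) \sum_(d : bool) P y d z.

Definition obs_law (R : realType) (n : nat) (P : 'I_n -> bool -> bool -> R) : Prop :=
  (forall y d z, 0 <= P y d z) /\
  \sum_(y < n) \sum_(d : bool) \sum_(z : bool) P y d z = 1 /\
  (forall z, 0 < PZ P z).

Definition pcond (R : realType) (n : nat) (P : 'I_n -> bool -> bool -> R)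
  (y : 'I_n) (d z : bool) : R := P y d z / PZ P z.

(* Index set of the family: a tag f in {0,1,2} (which of the three
   sub-families) and a subset T of [n].
   f = 0 : emptyset <> T subseteq {0,...,n-2}
   f = 1 : emptyset <> T strict subset of [n]
   f = 2 : emptyset <> T subseteq {0,...,n-2} *)
Definition valid_idx (n : nat) (x : 'I_3 * {set 'I_n}) : bool :=
  let: (f, T) := x in
  if val f == 1%N then (T != set0) && (T != setT)
  else (T != set0) && [forall k in T, (val k < n.-1)%N].

Definition ineq_idx (n : nat) := {x : 'I_3 * {set 'I_n} | valid_idx x}.

Definition ineq_lhs (R : realType) (n : nat) (f : 'I_3) (T : {set 'I_n})
  (p : 'I_n -> bool -> bool -> R) : R :=
  match val f with
  | 0%N => \sum_(k < n) - p k false true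
           + \sum_(k in T) (p k true false - p k true true)
  | 1%N => \sum_(k < n) - p k true false
           + \sum_(k in T) (p k false true - p k false false)
  | _ => \sum_(k < n) - p k false false
           + \sum_(k in T) (p k true true - p k true false)
  end.

Definition lhs_at (R : realType) (n : nat) (i : ineq_idx n)
  (p : 'I_n -> bool -> bool -> R) : R :=
  ineq_lhs (val i).1 (val i).2 p.

From HB Require Import structures.
From mathcomp Require Import all_boot all_order all_algebra.
From mathcomp Require Import reals.
From mathcomp Require Import zify ring lra.
Import Order.TTheory GRing.Theory Num.Theory.

(* Counting: the three families have 2^(n-1) - 1, 2^n - 2 and 2^(n-1) - 1
   members. Sharpness: every inequality reads
   - sum_k p(k,s) + sum_(k in T) (p(k,u) - p(k,v)) for three of the four cells
   (d,z); call the fourth one w. For the inequality (f, T0) with m = |T0|, let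
   p(.,u) = 1_T0, p(.,v) = 1_(~T0), and put mass a = m - 1/2 on p(n-1,s) and
   b = n - m - 1/2 on p(n-1,w). Both Z-columns then have mass n - 1/2, so
   normalizing only rescales the conditional probabilities. The chosen
   inequality evaluates to 1/2 and every other one to at most -1/2: within its
   family since |T :&: T0| - |T :\: T0| <= m - 1 for T <> T0, across families
   by comparing a, b, m and n - m, where families 0 and 2 need T, T0 to avoid
   n - 1. *)

Lemma card_nonempty_subsets {T : finType} (A : {set T}) :
  #|[pred B : {set T} | (B \subset A) && (B != set0)]| = (2 ^ #|A|).-1.
Proof.
rewrite -card_powerset (cardD1 set0) powersetE sub0set add1n /=.
by apply: eq_card => B; rewrite !inE andbC.
Qed.

Lemma card_proper_nonempty_subsets {T : finType} (A : {set T}) : A != set0 ->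
  #|[pred B : {set T} | (B \subset A) && (B != set0) && (B != A)]| = (2 ^ #|A|).-2.
Proof.
move=> A_neq0; rewrite -card_nonempty_subsets [in RHS](cardD1 A) !inE subxx A_neq0 /= add0n.
by apply: eq_card => B; rewrite !inE andbC.
Qed.

Lemma forall_lt_subset (n' : nat) (T : {set 'I_n'.+1}) :
  [forall k in T, (val k < n')%N] = (T \subset [set~ ord_max]).
Proof.
apply/forall_inP/subsetP => T_lt k /T_lt; rewrite !inE -val_eqE /= ltn_neqAle;
  by rewrite -ltnS ltn_ord andbT.
Qed.

Lemma card_ineq_idx (n' : nat) : #|{: ineq_idx n'.+1}| = (2 ^ n'.+2 - 4)%N.
Proof.
rewrite card_sig -sum1_card big_mkcond /=.
rewrite (eq_bigr (fun p => if valid_idx (p.1, p.2) then 1 else 0)%N); last by case.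
rewrite -(pair_bigA _ (fun f T => if valid_idx (f, T) then 1 else 0)%N).
rewrite !big_ord_recl big_ord0 /= addn0 -!big_mkcond /= !sum1_card.
have card_f02 : #|[pred T : {set 'I_n'.+1} | (T != set0) && [forall k in T, (val k < n')%N]]|
    = (2 ^ n').-1.
  have card_lt : #|[set~ @ord_max n']| = n' by rewrite cardsC1 card_ord.
  rewrite -[X in (2 ^ X).-1]card_lt -card_nonempty_subsets.
  by apply: eq_card => T; rewrite !inE forall_lt_subset andbC.
have card_f1 : #|[pred T : {set 'I_n'.+1} | (T != set0) && (T != setT)]| = (2 ^ n'.+1).-2.
  rewrite -[X in (2 ^ X).-2](card_ord n'.+1) -cardsT.
  have setT_neq0 : [set: 'I_n'.+1] != set0 by apply/set0Pn; exists ord0.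
  rewrite -(card_proper_nonempty_subsets _ setT_neq0).
  by apply: eq_card => T; rewrite !inE subsetT.
rewrite card_f02 card_f1 !expnS; have := expn_gt0 2 n'; lia.
Qed.

Lemma valid_idx_card {n' : nat} {f : 'I_3} {T : {set 'I_n'.+1}} :
  valid_idx (f, T) -> (0 < #|T| <= n')%N.
Proof.
rewrite /valid_idx card_gt0; case: ifP => _ /andP[-> T_small] /=.
  by rewrite -ltnS -[X in (_ < X)%N](card_ord n'.+1) -cardsT proper_card // properT.
rewrite forall_lt_subset in T_small.
by have := subset_leq_card T_small; rewrite cardsC1 card_ord.
Qed.

Lemma valid_idx_subset {n' : nat} {f : 'I_3} {T : {set 'I_n'.+1}} :
  valid_idx (f, T) -> val f != 1%N -> T \subset [set~ ord_max].
Proof.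
by rewrite /valid_idx forall_lt_subset => + /negbTE f_neq1; rewrite f_neq1 => /andP[].
Qed.

Local Open Scope ring_scope.

Section Laws.
Context {R : realType} {n : nat}.
Implicit Types (p q : 'I_n -> bool -> bool -> R) (s u v : 'I_n -> R).
Implicit Types (f : 'I_3) (T : {set 'I_n}).

Definition normalize q : 'I_n -> bool -> bool -> R :=
  fun y d z => q y d z / (PZ q false + PZ q true).

Lemma PZ_scale q c z : PZ (fun y d z => q y d z * c) z = PZ q z * c.
Proof. by rewrite /PZ big_distrl; apply: eq_bigr => y _; rewrite big_distrl. Qed.

Lemma PZ_normalize q z : PZ (normalize q) z = PZ q z / (PZ q false + PZ q true).
Proof. exact: PZ_scale. Qed.

Lemma obs_law_normalize q :
  (forall y d z, 0 <= q y d z) -> (forall z, 0 < PZ q z) -> obs_law (normalize q).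
Proof.
move=> q_ge0 PZ_gt0; have mass_gt0 : 0 < PZ q false + PZ q true by rewrite addr_gt0.
split; [|split].
- by move=> y d z; rewrite divr_ge0 ?q_ge0 ?ltW.
- under eq_bigr => y _ do rewrite exchange_big.
  rewrite exchange_big big_bool /= -/(PZ (normalize q) true) -/(PZ (normalize q) false).
  rewrite addrC.
  by rewrite !PZ_normalize -mulrDl divff // gt_eqF.
- by move=> z; rewrite PZ_normalize divr_gt0.
Qed.

Lemma pcond_normalize q y d z : (forall z, 0 < PZ q z) ->
  pcond (normalize q) y d z = pcond q y d z.
Proof.
move=> PZ_gt0; have mass_gt0 : 0 < PZ q false + PZ q true by rewrite addr_gt0.
rewrite /pcond PZ_normalize /normalize.
by field; rewrite !gt_eqF.
Qed.

Lemma eq_ineq_lhs f T {p p'} : (forall y d z, p y d z = p' y d z) ->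
  ineq_lhs f T p = ineq_lhs f T p'.
Proof.
by move=> pE; rewrite /ineq_lhs; case: (val f) => [|[|_]];
  congr (_ + _); apply: eq_bigr => k _; rewrite !pE.
Qed.

Lemma ineq_lhs_pcond f T {q S} : (forall z, PZ q z = S) ->
  ineq_lhs f T (pcond q) = ineq_lhs f T q / S.
Proof.
move=> PZE; have pcondE y d z : pcond q y d z = q y d z / S by rewrite /pcond PZE.
rewrite (eq_ineq_lhs _ _ pcondE).
rewrite /ineq_lhs; case: (val f) => [|[|_]]; rewrite mulrDl !big_distrl /=;
  by congr (_ + _); apply: eq_bigr => k _; ring.
Qed.

Definition cell_law (p00 p10 p01 p11 : 'I_n -> R) : 'I_n -> bool -> bool -> R :=
  fun k d z => if z then (if d then p11 k else p01 k) else (if d then p10 k else p00 k).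

Definition ineq_form s u v T : R := \sum_(k < n) - s k + \sum_(k in T) (u k - v k).

Lemma ineq_lhs_cell_law f T (p00 p10 p01 p11 : 'I_n -> R) :
  ineq_lhs f T (cell_law p00 p10 p01 p11) =
  match val f with
  | 0%N => ineq_form p01 p10 p11 T
  | 1%N => ineq_form p10 p01 p00 T
  | _ => ineq_form p00 p11 p10 T
  end.
Proof. by rewrite /ineq_lhs; case: (val f) => [|[|_]]. Qed.

End Laws.

Section Indicator.
Context {R : numDomainType} {T : finType}.

Definition indicator (A : {set T}) (x : T) : R := (x \in A)%:R.

Lemma sum_indicator (A B : {set T}) : \sum_(x in B) indicator A x = #|B :&: A|%:R.
Proof.
rewrite (big_setID A) /= [X in _ + X]big1 ?addr0 => [|x /setDP[_ /negbTE xA]]; last first.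
  by rewrite /indicator xA.
by rewrite -sumr_const; apply: eq_bigr => x /setIP[_ xA]; rewrite /indicator xA.
Qed.

End Indicator.

Lemma card_setI_lt {T : finType} (A B : {set T}) : A != B ->
  (#|A :&: B| < #|B| + #|A :\: B|)%N.
Proof.
move=> A_neq_B; have [AB0 | AB_gt0] := posnP #|A :\: B|.
  have AB : A \proper B by rewrite properEneq A_neq_B -setD_eq0 -cards_eq0 AB0.
  by rewrite AB0 addn0 (setIidPl (proper_sub AB)) proper_card.
by have := subset_leq_card (subsetIr A B); lia.
Qed.

Lemma card_setD_add_le {T : finType} {A B C : {set T}} : A \subset C -> B \subset C ->
  (#|A :\: B| + #|B| <= #|C| + #|A :&: B|)%N.
Proof.
move=> AC BC; have := cardsID B A; have := cardsUI A B.
have : (#|A :|: B| <= #|C|)%N by rewrite subset_leq_card // subUset AC.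
lia.
Qed.

Section Witness.
Context {R : realType} {n' : nat}.
Local Notation N := n'.+1.
Implicit Types (T : {set 'I_N}) (k : 'I_N).

Definition spike (c : R) k : R := c * indicator [set ord_max] k.

Lemma spike_ge0 c k : 0 <= c -> 0 <= spike c k.
Proof. by move=> c_ge0; rewrite mulr_ge0. Qed.

Lemma sum_spike c : \sum_k spike c k = c.
Proof. by rewrite -mulr_sumr -big_set /= sum_indicator setTI cards1 mulr1. Qed.

Lemma sum_spike_in_le T {c c' : R} : 0 <= c -> 0 <= c' ->
  \sum_(k in T) (spike c k - spike c' k) <= c.
Proof.
move=> c_ge0 c'_ge0; rewrite sumrB -!mulr_sumr sum_indicator -mulrBl.
have : (#|T :&: [set ord_max]| <= 1)%N.
  by rewrite -(cards1 (@ord_max n')) subset_leq_card ?subsetIr.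
rewrite -(ler_nat R); have := ler0n R #|T :&: [set ord_max]|; nra.
Qed.

Context {T0 : {set 'I_N}}.
Hypothesis card_T0 : (0 < #|T0| <= n')%N.
Local Notation m := (#|T0|%:R : R).

Let a : R := m - 2^-1.
Let b : R := n'%:R - m + 2^-1.
Let ind : 'I_N -> R := indicator T0.
Let indC : 'I_N -> R := indicator (~: T0).

Definition witness (f : 'I_3) : 'I_N -> bool -> bool -> R :=
  match val f with
  | 0%N => cell_law (spike b) ind (spike a) indC
  | 1%N => cell_law indC (spike a) ind (spike b)
  | _ => cell_law (spike a) indC (spike b) ind
  end.

Let a_ge0 : 0 <= a.
Proof. have : (1 <= #|T0|)%N by case/andP: card_T0. rewrite -(ler_nat R) /a; lra. Qed.

Let b_ge0 : 0 <= b.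
Proof. have : (#|T0| <= n')%N by case/andP: card_T0. rewrite -(ler_nat R) /b; lra. Qed.

Lemma witness_ge0 f k d z : 0 <= witness f k d z.
Proof.
by rewrite /witness /cell_law; case: (val f) => [|[|_]]; case: d; case: z;
  rewrite ?spike_ge0 ?ler0n.
Qed.

Lemma sum_ind : \sum_k ind k = m.
Proof. by rewrite -big_set /= sum_indicator setTI. Qed.

Lemma sum_indC : \sum_k indC k = n'%:R + 1 - m.
Proof.
rewrite -big_set /= sum_indicator setTI.
have := congr1 (fun x : nat => x%:R : R) (cardsC T0).
by rewrite /= card_ord natrD -natr1; lra.
Qed.

Lemma PZ_witness f z : PZ (witness f) z = n'%:R + 2^-1.
Proof.
rewrite /PZ /witness /cell_law; case: (val f) => [|[|_]]; case: z;
  under eq_bigr do rewrite big_bool /=;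
  rewrite big_split /= ?sum_spike ?sum_ind ?sum_indC /a /b; lra.
Qed.

Lemma sum_ind_indC_in T :
  \sum_(k in T) (ind k - indC k) = #|T :&: T0|%:R - #|T :\: T0|%:R.
Proof. by rewrite sumrB !sum_indicator setDE. Qed.

Lemma ineq_form_a_T0 : ineq_form (spike a) ind indC T0 = 2^-1.
Proof.
rewrite /ineq_form sumrN sum_spike sum_ind_indC_in setIid setDv cards0 /a; lra.
Qed.

Lemma ineq_form_a_le T : T != T0 -> ineq_form (spike a) ind indC T <= - 2^-1.
Proof.
move/card_setI_lt; rewrite -(ler_nat R) -natr1 natrD => card_lt.
by rewrite /ineq_form sumrN sum_spike sum_ind_indC_in /a; lra.
Qed.

Lemma ineq_form_ind_le T : ineq_form ind (spike a) (spike b) T <= - 2^-1.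
Proof.
have := sum_spike_in_le T a_ge0 b_ge0.
by rewrite /ineq_form sumrN sum_ind /a; lra.
Qed.

Lemma ineq_form_indC_le T : ineq_form indC (spike b) (spike a) T <= - 2^-1.
Proof.
have := sum_spike_in_le T b_ge0 a_ge0.
by rewrite /ineq_form sumrN sum_indC /b; lra.
Qed.

Lemma ineq_form_b_le T : T \subset [set~ ord_max] -> T0 \subset [set~ ord_max] ->
  ineq_form (spike b) indC ind T <= - 2^-1.
Proof.
move=> T_small T0_small; have := card_setD_add_le T_small T0_small.
rewrite cardsC1 card_ord /= -(ler_nat R) !natrD => card_le.
by rewrite /ineq_form sumrN sum_spike sumrB !sum_indicator -setDE /b; lra.
Qed.

Lemma ineq_lhs_witness_own f : ineq_lhs f T0 (witness f) = 2^-1.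
Proof.
by case: f => [[|[|[|//]]] ?]; rewrite /witness ineq_lhs_cell_law /= ineq_form_a_T0.
Qed.

Lemma ineq_lhs_witness_other {f g T} :
  valid_idx (f, T0) -> valid_idx (g, T) -> (val g = val f -> T != T0) ->
  ineq_lhs g T (witness f) <= - 2^-1.
Proof.
move=> /valid_idx_subset T0_small /valid_idx_subset T_small T_neq.
case: f g => [[|[|[|//]]] ?] [[|[|[|//]]] ?] /= in T0_small T_small T_neq *;
  rewrite /witness ineq_lhs_cell_law /=.
- exact: ineq_form_a_le (T_neq erefl).
- exact: ineq_form_ind_le.
- exact: ineq_form_b_le (T_small isT) (T0_small isT).
- exact: ineq_form_ind_le.
- exact: ineq_form_a_le (T_neq erefl).
- exact: ineq_form_indC_le.
- exact: ineq_form_b_le (T_small isT) (T0_small isT).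
- exact: ineq_form_indC_le.
- exact: ineq_form_a_le (T_neq erefl).
Qed.

End Witness.

Arguments witness {R n'} T0 f k d z.

Theorem corollary3 (R : realType) (n : nat) (hn : (0 < n)%N) :
  #|{: ineq_idx n}| = (2 ^ n.+1 - 4)%N /\
  forall i : ineq_idx n,
    exists P : 'I_n -> bool -> bool -> R,
      obs_law P /\
      (forall j : ineq_idx n, j != i -> lhs_at j (pcond P) <= 0) /\
      0 < lhs_at i (pcond P).
Proof.
case: n hn => // n' _; split; first exact: card_ineq_idx.
case=> -[f T0] valid_i; have card_T0 := valid_idx_card valid_i.
pose q : 'I_n'.+1 -> bool -> bool -> R := witness T0 f.
have PZ_q z : PZ q z = n'%:R + 2^-1 by exact: PZ_witness.
have mass_gt0 : 0 < n'%:R + 2^-1 :> R by have := ler0n R n'; lra.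
have PZ_gt0 z : 0 < PZ q z by rewrite PZ_q.
have lhsE j : lhs_at j (pcond (normalize q)) = lhs_at j q / (n'%:R + 2^-1).
  rewrite /lhs_at -(ineq_lhs_pcond _ _ PZ_q); apply: eq_ineq_lhs => y d z.
  exact: pcond_normalize.
exists (normalize q); split; last split.
- by apply: obs_law_normalize => //; apply: witness_ge0.
- case=> -[g T] valid_j j_neq; rewrite lhsE pmulr_lle0 ?invr_gt0 //.
  have T_neq : val g = val f -> T != T0.
    by move=> /val_inj gf; move: j_neq; rewrite -val_eqE /= xpair_eqE gf eqxx.
  apply: le_trans (ineq_lhs_witness_other card_T0 valid_i valid_j T_neq) _; lra.
- by rewrite lhsE /lhs_at /q ineq_lhs_witness_own divr_gt0 // invr_gt0 ltr0n.
Qed.
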